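(* Let $S$ be a finite set of axis-parallel unit squares all containing the origin, with pairwise distinct $x$-coordinates of top-right corners (and pairwise distinct $y$-coordinates). Store $S$ in a leaf-oriented red-black tree $\mathcal{T}$ keyed by the $x$-coordinate $s_x$ of the top-right corner, and for each node $v$ let $s_{\max}(v)$ (resp. $s_{\min}(v)$) be the square $s\in S(v)$ maximizing (resp. minimizing) $s_y$. For $s\in S$ define $N_{NE}(s)$, $N_{SE}(s)$, $N_{SW}(s)$, $N_{NW}(s)$ as the sets of internal nodes $v$ with $s_{\max}(\mathit{right}(v))=s$, $s_{\min}(\mathit{right}(v))=s$, $s_{\min}(\mathit{left}(v))=s$, $s_{\max}(\mathit{left}(v))=s$, respectively, and $N(s)$ as the union of these four sets and the leaf storing $s$. Let $h(s)=\max_{v\in N(s)}\mathrm{height}(v)$. Set $\mathit{col}(s)=0$ if $h(s)=0$, and otherwise $\mathit{col}(s)=4h(s)+j$, where $j=0$ if $h(s)=\max_{v\in N_{NE}(s)}\mathrm{height}(v)$, else $j=1$ if $h(s)=\max_{v\in N_{SE}(s)}\mathrm{height}(v)$, else $j=2$ if $h(s)=\max_{v\in N_{SW}(s)}\mathrm{height}(v)$, and $j=3$ otherwise. Then this coloring is conflict-free with respect to points.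
   Context: A leaf-oriented red-black tree stores one key per leaf (here one square per leaf, ordered by $s_x$), and internal nodes store splitting values strictly between consecutive keys. For a node $v$: $\mathit{left}(v)$, $\mathit{right}(v)$ are its children, $S(v)$ is the set of squares in the leaves of its subtree, and $\mathrm{height}(v)$ is the height of its subtree (0 for a leaf); $s_y$ is the $y$-coordinate of the top-right corner of $s$. A coloring is conflict-free with respect to points if every point contained in at least one square lies in some square whose color is unique among the squares containing that point. A maximum over an empty set is taken as $-\infty$. *)

From HB Require Import structures.
From mathcomp Require Import all_boot all_order all_algebra.
Set Implicit Arguments. Unset Strict Implicit. Unset Printing Implicit Defensive.
Import Order.TTheory GRing.Theory Num.Theory.
Local Open Scope ring_scope.

(* A square is represented by its top-right corner (s_x, s_y); it is the
   closed axis-parallel unit square [s_x - 1, s_x] x [s_y - 1, s_y]. *)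
Definition square (R : realFieldType) := (R * R)%type.

Definition in_square (R : realFieldType) (s : square R) (p : R * R) : bool :=
  (s.1 - 1 <= p.1 <= s.1) && (s.2 - 1 <= p.2 <= s.2).

Inductive rbcolor := Red | Black.

Inductive lotree (R : realFieldType) :=
| Leaf of square R
| Node of rbcolor & R & lotree R & lotree R.
Arguments Leaf {R}.
Arguments Node {R}.

Section Tree.
Context {R : realFieldType}.

Fixpoint leaves (t : lotree R) : seq (square R) :=
  match t with Leaf s => [:: s] | Node _ _ l r => leaves l ++ leaves r end.

Fixpoint height (t : lotree R) : nat :=
  match t with Leaf _ => 0%N | Node _ _ l r => (maxn (height l) (height r)).+1 end.

Fixpoint subtrees (t : lotree R) : seq (lotree R) :=
  match t with
  | Leaf _ => [:: t]
  | Node _ _ l r => t :: subtrees l ++ subtrees r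
  end.

Fixpoint search_tree (t : lotree R) : bool :=
  match t with
  | Leaf _ => true
  | Node _ k l r =>
      [&& all (fun s => s.1 < k) (leaves l), all (fun s => k < s.1) (leaves r),
          search_tree l & search_tree r]
  end.

Definition black_root (t : lotree R) : bool :=
  if t is Node Red _ _ _ then false else true.

Inductive rb_ok : lotree R -> nat -> Prop :=
| rb_leaf s : rb_ok (Leaf s) 0
| rb_black k l r n : rb_ok l n -> rb_ok r n -> rb_ok (Node Black k l r) n.+1
| rb_red k l r n : rb_ok l n -> rb_ok r n -> black_root l -> black_root r ->
    rb_ok (Node Red k l r) n.

Definition red_black (t : lotree R) : Prop := black_root t /\ exists n, rb_ok t n.

Fixpoint smax (t : lotree R) : square R :=
  match t with
  | Leaf s => s
  | Node _ _ l r => let a := smax l in let b := smax r in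
                    if a.2 < b.2 then b else a
  end.
Fixpoint smin (t : lotree R) : square R :=
  match t with
  | Leaf s => s
  | Node _ _ l r => let a := smin l in let b := smin r in
                    if b.2 < a.2 then b else a
  end.

Definition is_NE (s : square R) (v : lotree R) : bool :=
  if v is Node _ _ _ r then smax r == s else false.
Definition is_SE (s : square R) (v : lotree R) : bool :=
  if v is Node _ _ _ r then smin r == s else false.
Definition is_SW (s : square R) (v : lotree R) : bool :=
  if v is Node _ _ l _ then smin l == s else false.
Definition is_NW (s : square R) (v : lotree R) : bool :=
  if v is Node _ _ l _ then smax l == s else false.
Definition is_leaf_of (s : square R) (v : lotree R) : bool :=
  if v is Leaf s' then s' == s else false.

(* maximum of a finite list of naturals; None plays the role of -oo *)
Definition maxo (l : seq nat) : option nat :=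
  foldr (fun x acc => match acc with None => Some x | Some y => Some (maxn x y) end)
        None l.

Definition maxheight (T : lotree R) (P : lotree R -> bool) : option nat :=
  maxo [seq height v | v <- subtrees T & P v].

Definition hN (T : lotree R) (s : square R) : option nat :=
  maxheight T (fun v => [|| is_NE s v, is_SE s v, is_SW s v, is_NW s v
                          | is_leaf_of s v]).

Definition sq_col (T : lotree R) (s : square R) : nat :=
  match hN T s with
  | None => 0%N
  | Some 0 => 0%N
  | Some h =>
      let j := if maxheight T (is_NE s) == Some h then 0%N
               else if maxheight T (is_SE s) == Some h then 1%N
               else if maxheight T (is_SW s) == Some h then 2%N
               else 3%N in
      (4 * h + j)%N
  end.

Definition conflict_free (S : seq (square R)) (c : square R -> nat) : Prop :=
  forall p : R * R, (exists2 s, s \in S & in_square s p) ->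
    exists2 s, s \in S & in_square s p /\
      forall s', s' \in S -> in_square s' p -> s' != s -> c s' != c s.

End Tree.

From HB Require Import structures.
From mathcomp Require Import all_boot all_order all_algebra zify lra.
Set Implicit Arguments. Unset Strict Implicit. Unset Printing Implicit Defensive.
Import Order.TTheory GRing.Theory Num.Theory.
Local Open Scope ring_scope.

(* Fix a point p and let w be the lowest node whose subtree holds every square
   containing p.  Unless w is a leaf, squares containing p occur in both
   subtrees of w; as all squares contain the origin, if p lies (say) in the
   north-east quadrant then every square of right(w) reaches p horizontally,
   and s_max(right(w)) reaches it vertically.  So some square containing p has
   w in its set N, and its colour is at least 4 height(w).
   Conversely, a colour 4h + j > 0 of a square s is witnessed by a node v of
   height h at which s is the j-th extreme square of a child.  Two squares
   below w with the same colour of at least 4 height(w) have witnesses of the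
   same height lying above w, hence the same witness, hence they coincide.
   Thus the largest colour among the squares containing p is unique. *)

Definition rbcolor_eqb (a b : rbcolor) : bool :=
  match a, b with Red, Red | Black, Black => true | _, _ => false end.

Lemma rbcolor_eqP : Equality.axiom rbcolor_eqb.
Proof. by do 2!case; constructor. Qed.

HB.instance Definition _ := hasDecEq.Build rbcolor rbcolor_eqP.

Lemma exists_seq_argmax (A : eqType) (f : A -> nat) (s : seq A) x : x \in s ->
  exists2 y, y \in s & {in s, forall z, f z <= f y}%N.
Proof.
elim: s x => // a s IH x _; case: s IH => [_|b s IH].
  by exists a; rewrite ?inE // => z; rewrite inE => /eqP ->.
have [y ys ymax] := IH b (mem_head b s).
case: (leqP (f a) (f y)) => fay.
  by exists y => [|z /predU1P [->|/ymax]] //; rewrite in_cons ys orbT.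
by exists a; rewrite ?mem_head // => z /predU1P [->|/ymax]; lia.
Qed.

Section Subtrees.
Variable R : realFieldType.
Implicit Types (t u v w : lotree R) (s x : square R).

Fixpoint lotree_eqb t u : bool :=
  match t, u with
  | Leaf a, Leaf b => a == b
  | Node c k l r, Node c' k' l' r' =>
      [&& c == c', k == k', lotree_eqb l l' & lotree_eqb r r']
  | _, _ => false
  end.

Lemma lotree_eqP : Equality.axiom lotree_eqb.
Proof.
elim=> [a|c k l IHl r IHr] [b|c' k' l' r'] /=; try by constructor.
  by apply: (iffP eqP) => [->|[]].
apply: (iffP and4P) => [[/eqP-> /eqP-> /IHl-> /IHr->] //|[<- <- <- <-]].
by split; rewrite ?eqxx //; [apply/IHl | apply/IHr].
Qed.

HB.instance Definition _ := hasDecEq.Build (lotree R) lotree_eqP.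

Lemma mem_subtrees_self t : t \in subtrees t.
Proof. by case: t => [s|c k l r]; rewrite inE eqxx. Qed.

Lemma subtree_leaves v t : v \in subtrees t -> {subset leaves v <= leaves t}.
Proof.
elim: t => [s|c k l IHl r IHr] /=; first by rewrite inE => /eqP ->.
rewrite inE mem_cat => /orP[/eqP -> //|/orP[/IHl|/IHr] sub] x /sub;
  by rewrite mem_cat => ->; rewrite ?orbT.
Qed.

Lemma subtree_height v t : v \in subtrees t -> v = t \/ (height v < height t)%N.
Proof.
elim: t => [s|c k l IHl r IHr] /=; first by rewrite inE => /eqP; left.
rewrite inE mem_cat => /orP[/eqP|/orP[/IHl|/IHr]]; first by left.
  by case=> [->|?]; right; lia.
by case=> [->|?]; right; lia.
Qed.

Lemma mem_leaf_subtrees s t : s \in leaves t -> Leaf s \in subtrees t.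
Proof.
elim: t => [s'|c k l IHl r IHr] /=; first by rewrite !inE => /eqP ->.
by rewrite inE !mem_cat => /orP[/IHl|/IHr] ->; rewrite ?orbT.
Qed.

Section Laminar.
Variable T : lotree R.
Hypothesis uniq_leaves : uniq (leaves T).

Lemma subtrees_laminar v w x : v \in subtrees T -> w \in subtrees T ->
  x \in leaves v -> x \in leaves w -> v \in subtrees w \/ w \in subtrees v.
Proof.
move: uniq_leaves; elim: T v w => [s|c k l IHl r IHr] v w /=.
  by rewrite !inE => _ /eqP -> /eqP ->; left; rewrite inE.
rewrite cat_uniq => /and3P[ul disj ur].
rewrite !inE !mem_cat => /orP[/eqP -> wT|vT]; first by right; rewrite inE mem_cat.
case/orP=> [/eqP ->|wT]; first by left; rewrite inE mem_cat vT orbT.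
have disjP y : y \in leaves l -> y \in leaves r -> False.
  by move=> yl yr; move/hasPn: disj => /(_ y yr); rewrite yl.
case/orP: vT => vT; case/orP: wT => wT xv xw.
- exact: IHl.
- by case: (disjP x); [apply: subtree_leaves vT x xv | apply: subtree_leaves wT x xw].
- by case: (disjP x); [apply: subtree_leaves wT x xw | apply: subtree_leaves vT x xv].
- exact: IHr.
Qed.

Lemma subtree_of_higher v w x : v \in subtrees T -> w \in subtrees T ->
  x \in leaves v -> x \in leaves w -> (height w <= height v)%N -> w \in subtrees v.
Proof.
move=> vT wT xv xw hwv; case: (subtrees_laminar vT wT xv xw) => // /subtree_height.
by case=> [->|?]; [rewrite mem_subtrees_self | lia].
Qed.

Lemma subtrees_eq_height v w x : v \in subtrees T -> w \in subtrees T ->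
  x \in leaves v -> x \in leaves w -> height v = height w -> v = w.
Proof.
move=> vT wT xv xw hvw.
have /subtree_height [] // : w \in subtrees v by apply: subtree_of_higher xv xw _; lia.
lia.
Qed.

End Laminar.

Lemma mem_smax t : smax t \in leaves t.
Proof.
elim: t => [s|c k l IHl r IHr] /=; first by rewrite inE.
by case: ifP => _; rewrite mem_cat ?IHl ?IHr ?orbT.
Qed.

Lemma mem_smin t : smin t \in leaves t.
Proof.
elim: t => [s|c k l IHl r IHr] /=; first by rewrite inE.
by case: ifP => _; rewrite mem_cat ?IHl ?IHr ?orbT.
Qed.

Lemma le_smax t s : s \in leaves t -> s.2 <= (smax t).2.
Proof.
elim: t => [s'|c k l IHl r IHr] /=; first by rewrite inE => /eqP ->.
rewrite mem_cat => /orP[/IHl|/IHr] ?; case: ltP => ?; lra.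
Qed.

Lemma smin_le t s : s \in leaves t -> (smin t).2 <= s.2.
Proof.
elim: t => [s'|c k l IHl r IHr] /=; first by rewrite inE => /eqP ->.
rewrite mem_cat => /orP[/IHl|/IHr] ?; case: ltP => ?; lra.
Qed.

End Subtrees.

Lemma maxo_None (l : seq nat) : maxo l = None -> l = [::].
Proof. by case: l => //= x l; case: (maxo l). Qed.

Lemma maxoP (l : seq nat) m :
  maxo l = Some m <-> m \in l /\ {in l, forall x, x <= m}%N.
Proof.
elim: l m => [|x l IH] m /=; first by split=> [|[]].
case El: (maxo l) => [y|]; last first.
  rewrite (maxo_None El); split=> [[<-]|[]]; last by rewrite inE => /eqP ->.
  by split=> [|z]; rewrite inE // => /eqP ->.
have [yl ymax] := (IH y).1 El.
split=> [[<-]|[mxl mmax]].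
  split; first by case: (leqP x y) => _; rewrite inE ?yl ?eqxx ?orbT.
  by move=> z; rewrite inE => /predU1P [->|/ymax]; lia.
have yxl : y \in x :: l by rewrite inE yl orbT.
have := mmax x (mem_head x l); have := mmax y yxl.
by move: mxl; rewrite inE => /predU1P [->|/ymax]; move=> *; congr Some; lia.
Qed.

Section Colouring.
Variable R : realFieldType.
Implicit Types (v w : lotree R) (s : square R).

Definition in_N s v : bool :=
  [|| is_NE s v, is_SE s v, is_SW s v, is_NW s v | is_leaf_of s v].

(* The sets N_NE, N_SE, N_SW, N_NW, indexed by the offset j of the colour 4 h(s) + j. *)
Definition is_quadrant (j : nat) s v : bool :=
  match j with 0 => is_NE s v | 1 => is_SE s v | 2 => is_SW s v | _ => is_NW s v end.

Lemma is_quadrant_inj j s1 s2 v : is_quadrant j s1 v -> is_quadrant j s2 v -> s1 = s2.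
Proof. by case: j => [|[|[|j]]]; case: v => // c k l r /= /eqP <- /eqP. Qed.

Lemma is_quadrant_leaves j s v : is_quadrant j s v -> s \in leaves v.
Proof.
case: v => [|c k l r]; first by case: j => [|[|[|j]]].
by case: j => [|[|[|j]]] /= /eqP <-; rewrite mem_cat ?mem_smax ?mem_smin ?orbT.
Qed.

Lemma is_quadrant_in_N j s v : is_quadrant j s v -> in_N s v.
Proof. by case: j => [|[|[|j]]] /= qv; rewrite /in_N qv ?orbT. Qed.

Variable T : lotree R.

Lemma maxheightP (P : pred (lotree R)) m : maxheight T P = Some m <->
  (exists2 v, v \in subtrees T & P v && (height v == m)) /\
  {in subtrees T, forall v, P v -> height v <= m}%N.
Proof.
rewrite /maxheight maxoP; split.
  case=> /mapP [v]; rewrite mem_filter => /andP[Pv vT] -> vmax.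
  split=> [|u uT Pu]; first by exists v; rewrite ?Pv ?eqxx.
  by apply: vmax; apply: map_f; rewrite mem_filter Pu.
case=> [[v vT /andP[Pv /eqP <-]] vmax]; split.
  by apply: map_f; rewrite mem_filter Pv.
by move=> x /mapP [u]; rewrite mem_filter => /andP[Pu uT] ->; apply: vmax.
Qed.

Lemma maxheight_exists (P : pred (lotree R)) v : v \in subtrees T -> P v ->
  exists m, maxheight T P = Some m.
Proof.
move=> vT Pv; case E: (maxheight T P) => [m|]; first by exists m.
have : height v \in [seq height u | u <- subtrees T & P u].
  by apply: map_f; rewrite mem_filter Pv.
by rewrite (maxo_None E).
Qed.

Lemma maxheight_subpred (P Q : pred (lotree R)) v h :
  {in subtrees T, forall u, P u -> Q u} -> maxheight T Q = Some h ->
  v \in subtrees T -> P v -> height v = h -> maxheight T P = Some h.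
Proof.
move=> PQ /maxheightP [_ Qmax] vT Pv hv; apply/maxheightP; split.
  by exists v; rewrite ?Pv ?hv ?eqxx.
by move=> u uT Pu; apply: Qmax (PQ u uT Pu).
Qed.

Lemma hN_exists s : s \in leaves T -> exists h, hN T s = Some h.
Proof.
move=> sT; apply: (@maxheight_exists (in_N s) _ (mem_leaf_subtrees sT)).
by rewrite /in_N /= eqxx.
Qed.

Lemma sq_col_bounds s h : hN T s = Some h -> (4 * h <= sq_col T s <= 4 * h + 3)%N.
Proof. by rewrite /sq_col => ->; case: h => // h; repeat case: ifP => _; lia. Qed.

Lemma height_le_sq_col s w : w \in subtrees T -> in_N s w ->
  (4 * height w <= sq_col T s)%N.
Proof.
move=> wT sw; have [h Eh] := maxheight_exists wT sw.
have [_ hmax] := (maxheightP _ _).1 Eh.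
by have := hmax w wT sw; have := sq_col_bounds Eh; lia.
Qed.

Lemma sq_col_witness s h : hN T s = Some h -> (0 < h)%N ->
  exists2 v, v \in subtrees T & (height v == h) && is_quadrant (sq_col T s %% 4) s v.
Proof.
case: h => // h Eh _.
have [[v0 v0T /andP[Nv0 /eqP hv0]] _] := (maxheightP _ _).1 Eh.
have witness j : maxheight T (is_quadrant j s) = Some h.+1 ->
    exists2 v, v \in subtrees T & (height v == h.+1) && is_quadrant j s v.
  by case/maxheightP => [[v vT /andP[qv hv]] _]; exists v; rewrite ?qv ?hv.
have not_max j : maxheight T (is_quadrant j s) != Some h.+1 -> ~~ is_quadrant j s v0.
  apply: contra => qv0; apply/eqP; apply: maxheight_subpred Eh v0T qv0 hv0.
  by move=> u _; apply: is_quadrant_in_N.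
rewrite /sq_col Eh mulnC modnMDl.
case: ifP => [/eqP/(witness 0%N) //|/negbT/(not_max 0%N) NE].
case: ifP => [/eqP/(witness 1%N) //|/negbT/(not_max 1%N) SE].
case: ifP => [/eqP/(witness 2%N) //|/negbT/(not_max 2%N) SW].
(* A highest node of N(s) lies in none of N_NE, N_SE, N_SW and is not a leaf. *)
exists v0; rewrite // hv0 eqxx /=.
move: Nv0 NE SE SW; rewrite /in_N /= => /or4P[-> // | -> // | -> // | /orP[//|]].
by case: v0 {v0T not_max} hv0.
Qed.

Lemma sq_col_inj_under w t1 t2 : uniq (leaves T) -> w \in subtrees T ->
  t1 \in leaves w -> t2 \in leaves w -> (4 * height w <= sq_col T t1)%N ->
  sq_col T t1 = sq_col T t2 -> t1 = t2.
Proof.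
move=> uT wT t1w t2w hw ec.
have [h E1] := hN_exists (subtree_leaves wT t1w).
have [h2 E2] := hN_exists (subtree_leaves wT t2w).
have B1 := sq_col_bounds E1; have B2 := sq_col_bounds E2.
have {B2} eh : h2 = h by move: B2; rewrite -ec; lia.
subst h2; have hwh : (height w <= h)%N by lia.
have [h0|hpos] := posnP h.
  move: hwh; rewrite h0 leqn0; case: w {wT hw} t1w t2w => [s|c k l r] //=.
  by rewrite !inE => /eqP -> /eqP ->.
have [v1 v1T /andP[/eqP hv1 q1]] := sq_col_witness E1 hpos.
have [v2 v2T /andP[/eqP hv2 q2]] := sq_col_witness E2 hpos.
rewrite -ec in q2.
have wv1 : w \in subtrees v1.
  by apply: (subtree_of_higher uT v1T wT (is_quadrant_leaves q1) t1w); rewrite hv1.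
have wv2 : w \in subtrees v2.
  by apply: (subtree_of_higher uT v2T wT (is_quadrant_leaves q2) t2w); rewrite hv2.
have ev : v1 = v2.
  apply: (subtrees_eq_height uT v1T v2T (subtree_leaves wv1 t1w) (subtree_leaves wv2 t1w)).
  by rewrite hv1 hv2.
by apply: is_quadrant_inj q1 _; rewrite ev.
Qed.

End Colouring.

Section Geometry.
Variable R : realFieldType.
Implicit Types (s t : square R) (p : R * R).

Lemma in_square_origin s p : in_square s (0, 0) ->
  in_square s p =
    (if 0 <= p.1 then p.1 <= s.1 else s.1 - 1 <= p.1) &&
    (if 0 <= p.2 then p.2 <= s.2 else s.2 - 1 <= p.2).
Proof.
rewrite /in_square /= => /andP[/andP[x0 x1] /andP[y0 y1]].
case: (lerP 0 p.1) => ?; case: (lerP 0 p.2) => ?; apply/idP/idP.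
all: try by case/andP => /andP[? ?] /andP[? ?]; apply/andP; split; lra.
all: by case/andP => ? ?; apply/andP; split; apply/andP; split; lra.
Qed.

Lemma split_node_in_N c k l r p tl tr :
  search_tree (Node c k l r) ->
  all (fun s => in_square s (0, 0)) (leaves (Node c k l r)) ->
  tl \in leaves l -> tr \in leaves r -> in_square tl p -> in_square tr p ->
  exists2 t, t \in leaves (Node c k l r) & in_square t p && in_N t (Node c k l r).
Proof.
move=> /and4P[/allP ltk /allP gtk _ _] /allP origin tll trr tlp trp.
have pick t : t \in leaves (Node c k l r) -> in_N t (Node c k l r) ->
    (if 0 <= p.1 then p.1 <= t.1 else t.1 - 1 <= p.1) ->
    (if 0 <= p.2 then p.2 <= t.2 else t.2 - 1 <= p.2) ->
    exists2 t, t \in leaves (Node c k l r) & in_square t p && in_N t (Node c k l r).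
  by move=> tv Nt x y; exists t; rewrite // Nt andbT in_square_origin ?x ?y ?origin.
have tl_k := ltk tl tll; have k_tr := gtk tr trr.
move: tlp trp pick; rewrite /in_square.
move=> /andP[/andP[? ?] /andP[? ?]] /andP[/andP[? ?] /andP[? ?]].
case: (lerP 0 p.1) => ?; case: (lerP 0 p.2) => ? pick.
- apply: (pick (smax r)); first by rewrite mem_cat mem_smax orbT.
  + by rewrite /in_N /= eqxx.
  + by have := gtk _ (mem_smax r); lra.
  + by have := le_smax trr; lra.
- apply: (pick (smin r)); first by rewrite mem_cat mem_smin orbT.
  + by rewrite /in_N /= eqxx orbT.
  + by have := gtk _ (mem_smin r); lra.
  + by have := smin_le trr; lra.
- apply: (pick (smax l)); first by rewrite mem_cat mem_smax.
  + by rewrite /in_N /= eqxx !orbT.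
  + by have := ltk _ (mem_smax l); lra.
  + by have := le_smax tll; lra.
- apply: (pick (smin l)); first by rewrite mem_cat mem_smin.
  + by rewrite /in_N /= eqxx !orbT.
  + by have := ltk _ (mem_smin l); lra.
  + by have := smin_le tll; lra.
Qed.

Lemma split_node_exists p v :
  search_tree v -> all (fun s => in_square s (0, 0)) (leaves v) ->
  has (fun s => in_square s p) (leaves v) ->
  exists2 w, w \in subtrees v &
    {in leaves v, forall s, in_square s p -> s \in leaves w} /\
    exists2 t, t \in leaves v & in_square t p && in_N t w.
Proof.
elim: v => [s|c k l IHl r IHr].
  rewrite /= orbF => _ _ sp; exists (Leaf s); first exact: mem_subtrees_self.
  by split=> //; exists s; rewrite ?inE // sp /in_N /= eqxx.
move=> st origin; have /and4P[_ _ stl str] := st.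
move: (origin); rewrite /= all_cat has_cat => /andP[ol or].
case El: (has _ (leaves l)); case Er: (has _ (leaves r)) => //= _.
- have [tl tll tlp] := hasP El; have [tr trr trp] := hasP Er.
  exists (Node c k l r); first exact: mem_subtrees_self.
  by split=> [s + _|]; last exact: split_node_in_N st origin tll trr tlp trp.
- have [w wl [cover [t tl tw]]] := IHl stl ol El.
  exists w; first by rewrite inE mem_cat wl orbT.
  split; last by exists t; rewrite // mem_cat tl.
  move=> s; rewrite mem_cat => /orP[sl|sr] sp; first exact: cover.
  by move/hasPn: Er => /(_ s sr); rewrite sp.
- have [w wr [cover [t tr tw]]] := IHr str or Er.
  exists w; first by rewrite inE mem_cat wr !orbT.
  split; last by exists t; rewrite // mem_cat tr orbT.
  move=> s; rewrite mem_cat => /orP[sl|sr] sp; last exact: cover.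
  by move/hasPn: El => /(_ s sl); rewrite sp.
Qed.

End Geometry.

Theorem mainTheorem3 (R : realFieldType) (T : lotree R) :
  red_black T ->
  search_tree T ->
  uniq [seq s.2 | s <- leaves T] ->
  all (fun s => in_square s (0, 0)) (leaves T) ->
  conflict_free (leaves T) (sq_col T).
Proof.
move=> _ st uy origin p [s0 s0T s0p].
have uT : uniq (leaves T) := map_uniq uy.
have [w wT [cover [t tT /andP[tp tw]]]] :=
  split_node_exists st origin (introT hasP (ex_intro2 _ _ s0 s0T s0p)).
have tQ : t \in [seq s <- leaves T | in_square s p] by rewrite mem_filter tp tT.
have [y] := exists_seq_argmax (sq_col T) tQ.
rewrite mem_filter => /andP[yp yT] ymax.
exists y => //; split=> // s sT sp; apply: contra_neq => col_eq.
have hw : (4 * height w <= sq_col T s)%N.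
  by rewrite col_eq (leq_trans (height_le_sq_col wT tw) (ymax t tQ)).
exact: sq_col_inj_under uT wT (cover s sT sp) (cover y yT yp) hw col_eq.
Qed.
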